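(* Let $Y=W_1\times W_2$ with coordinates $(a,b,x,y)$, $T=ab$, and $$\Phi=\begin{pmatrix}1-T & a^4\\ -b^4 & 1+T+T^2+T^3\end{pmatrix},\qquad \varphi(a,b,x,y)=\Big(a,b,\Phi\tbinom{x}{y}\Big).$$ Then $\mu=\varphi\circ\mu_0$ is a real circle form on $Y$, and it is equivalent to the linear real circle form $\mu_0$.
   Context: For $k\ge1$, $W_k=\mathbb{C}^2$ is the $\mathbb{C}^*$-module with weights $(k,-k)$: $t\cdot(x,y)=(t^kx,t^{-k}y)$. Thus on $Y=W_1\times W_2$, $t\cdot(a,b,x,y)=(ta,t^{-1}b,t^2x,t^{-2}y)$. Let $\sigma(t)=\overline{t}^{-1}$ on $\mathbb{C}^*$. A real circle form on $Y$ is an antiholomorphic involution $\mu$ of $Y$ with $\mu(t\cdot p)=\sigma(t)\cdot\mu(p)$ for all $t\in\mathbb{C}^*$, $p\in Y$; two such forms $\mu_1,\mu_2$ are equivalent if $\mu_2=\psi\circ\mu_1\circ\psi^{-1}$ for some regular $\mathbb{C}^*$-equivariant automorphism $\psi$ of $Y$. Here $\mu_0(a,b,x,y)=(\overline{b},\overline{a},\overline{y},\overline{x})$. *)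

From HB Require Import structures.
From mathcomp Require Import all_boot all_order all_algebra.
Set Implicit Arguments. Unset Strict Implicit. Unset Printing Implicit Defensive.
Import Order.TTheory GRing.Theory Num.Theory.
Local Open Scope ring_scope.

Section Defs.
Variable C : numClosedFieldType.

(* Points of Y = W_1 x W_2 = C^4, coordinates (a,b,x,y). *)
Definition Y := (C * C * C * C)%type.

Inductive poly4 : Type :=
| Xa | Xb | Xx | Xy
| Cst of C
| Add of poly4 & poly4
| Mul of poly4 & poly4.

Fixpoint peval (P : poly4) (p : Y) : C :=
  let '(a, b, x, y) := p in
  match P with
  | Xa => a | Xb => b | Xx => x | Xy => y
  | Cst c => c
  | Add P1 P2 => peval P1 p + peval P2 p
  | Mul P1 P2 => peval P1 p * peval P2 p
  end.

Definition regular (f : Y -> Y) : Prop :=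
  exists P1 P2 P3 P4 : poly4,
    forall p, f p = (peval P1 p, peval P2 p, peval P3 p, peval P4 p).

Definition antiregular (f : Y -> Y) : Prop :=
  exists P1 P2 P3 P4 : poly4,
    forall p, f p = ((peval P1 p)^*, (peval P2 p)^*, (peval P3 p)^*, (peval P4 p)^*).

Definition act (t : C) (p : Y) : Y :=
  let '(a, b, x, y) := p in (t * a, t^-1 * b, t ^+ 2 * x, t ^- 2 * y).

Definition sigma (t : C) : C := (t^*)^-1.

Definition real_circle_form (mu : Y -> Y) : Prop :=
  [/\ antiregular mu,
      (forall p, mu (mu p) = p) &
      (forall t p, t != 0 -> mu (act t p) = act (sigma t) (mu p))].

Definition equiv_auto (psi psi_inv : Y -> Y) : Prop :=
  [/\ regular psi, regular psi_inv,
      cancel psi psi_inv, cancel psi_inv psi &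
      (forall t p, t != 0 -> psi (act t p) = act t (psi p))].

Definition equivalent_forms (mu1 mu2 : Y -> Y) : Prop :=
  exists psi psi_inv, equiv_auto psi psi_inv /\
    forall p, mu2 p = psi (mu1 (psi_inv p)).

Definition mu0 (p : Y) : Y :=
  let '(a, b, x, y) := p in (b^*, a^*, y^*, x^*).

Definition phi (p : Y) : Y :=
  let '(a, b, x, y) := p in
  let T := a * b in
  (a, b, (1 - T) * x + a ^+ 4 * y, - (b ^+ 4) * x + (1 + T + T ^+ 2 + T ^+ 3) * y).

Definition mu (p : Y) : Y := phi (mu0 p).

End Defs.

(** Both maps act fibrewise linearly over the (a,b)-plane: [phi] multiplies
    (x,y) by the matrix [Phi], and [mu0] intertwines multiplication by a
    matrix [M] with multiplication by its twisted conjugate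
    [M^*(a,b) = J conj(M(conj b, conj a)) J], [J] the coordinate swap.
    Hence [mu = phi o mu0] is an involution as soon as [Phi Phi^* = 1], which
    holds because [Phi^*] is the adjugate of [Phi] and
    [det Phi = (1 - T)(1 + T + T^2 + T^3) + a^4 b^4 = 1].  Equivalence to
    [mu0] is a coboundary statement: an explicit matrix [Psi] of the same
    weights with [det Psi = 1] satisfies [Phi = Psi (Psi^-1)^*], so
    conjugating [mu0] by the fibrewise map of [Psi] gives [mu]. *)
From HB Require Import structures.
From mathcomp Require Import all_boot all_order all_algebra.
From mathcomp Require Import ring.
Set Implicit Arguments. Unset Strict Implicit. Unset Printing Implicit Defensive.
Import Order.TTheory GRing.Theory Num.Theory.
Local Open Scope ring_scope.

Arguments Xa {C}. Arguments Xb {C}. Arguments Xx {C}. Arguments Xy {C}.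
Arguments Cst {C}. Arguments Add {C}. Arguments Mul {C}.

Section CircleForms.
Variable C : numClosedFieldType.
Implicit Types (P : poly4 C) (p : Y C) (a b t : C).

Local Notation "P |+| Q" := (Add P Q) (at level 50, left associativity).
Local Notation "P |*| Q" := (Mul P Q) (at level 40, left associativity).

Fixpoint ppow P n : poly4 C := if n is n'.+1 then ppow P n' |*| P else Cst 1.

(* Matrix entries are polynomials in [a, b] only: they are read at [(a, b, 0, 0)]. *)
Definition entry P a b := peval P (a, b, 0, 0).

Fixpoint pbase P : poly4 C :=
  match P with
  | Xx | Xy => Cst 0
  | Add P1 P2 => pbase P1 |+| pbase P2
  | Mul P1 P2 => pbase P1 |*| pbase P2
  | _ => P
  end.

Lemma peval_base P a b x y : peval (pbase P) (a, b, x, y) = entry P a b.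
Proof. by rewrite /entry; elim: P => //= P1 -> P2 ->. Qed.

(* Specialised to [^*]: rewriting with [rmorphD] etc. leaves the canonical
   morphism wrapper, which [conjCi] and [conjC_nat] then fail to match. *)
Lemma conjCD (x y : C) : (x + y)^* = x^* + y^*. Proof. exact: rmorphD. Qed.
Lemma conjCB (x y : C) : (x - y)^* = x^* - y^*. Proof. exact: rmorphB. Qed.
Lemma conjCN (x : C) : (- x)^* = - x^*. Proof. exact: rmorphN. Qed.
Lemma conjCM (x y : C) : (x * y)^* = x^* * y^*. Proof. exact: rmorphM. Qed.
Lemma conjCV (x : C) : (x^-1)^* = (x^*)^-1. Proof. exact: fmorphV. Qed.

Fixpoint ptwist P : poly4 C :=
  match P with
  | Xa => Xb | Xb => Xa | Xx => Xy | Xy => Xx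
  | Cst c => Cst c^*
  | Add P1 P2 => ptwist P1 |+| ptwist P2
  | Mul P1 P2 => ptwist P1 |*| ptwist P2
  end.

Lemma peval_twist P p : peval (ptwist P) p = (peval P (mu0 p))^*.
Proof.
case: p => [[[a b] x] y].
by elim: P => /= [||||c|P1 -> P2 ->|P1 -> P2 ->]; rewrite ?conjCK ?conjCD ?conjCM.
Qed.

Lemma entry_twist P a b : entry (ptwist P) a b = (entry P b^* a^*)^*.
Proof. by rewrite /entry peval_twist /= rmorph0. Qed.

Record mat := Mat { m11 : poly4 C; m12 : poly4 C; m21 : poly4 C; m22 : poly4 C }.
Implicit Types M : mat.

Definition fibre_map M p : Y C :=
  let '(a, b, x, y) := p in
  (a, b, entry (m11 M) a b * x + entry (m12 M) a b * y,
         entry (m21 M) a b * x + entry (m22 M) a b * y).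

Definition mat_det M a b :=
  entry (m11 M) a b * entry (m22 M) a b - entry (m12 M) a b * entry (m21 M) a b.

Definition mat_adj M : mat :=
  Mat (m22 M) (Cst (-1) |*| m12 M) (Cst (-1) |*| m21 M) (m11 M).

Definition mat_star M : mat :=
  Mat (ptwist (m22 M)) (ptwist (m21 M)) (ptwist (m12 M)) (ptwist (m11 M)).

Definition weighted M := forall t a b, t != 0 ->
  [/\ entry (m11 M) (t * a) (t^-1 * b) = entry (m11 M) a b,
      entry (m12 M) (t * a) (t^-1 * b) = t ^+ 4 * entry (m12 M) a b,
      t ^+ 4 * entry (m21 M) (t * a) (t^-1 * b) = entry (m21 M) a b &
      entry (m22 M) (t * a) (t^-1 * b) = entry (m22 M) a b].

Lemma regular_fibre_map M : regular (fibre_map M).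
Proof.
exists Xa, Xb, (pbase (m11 M) |*| Xx |+| pbase (m12 M) |*| Xy),
  (pbase (m21 M) |*| Xx |+| pbase (m22 M) |*| Xy).
by case=> [[[a b] x] y]; rewrite /= !peval_base.
Qed.

Lemma fibre_mapK M :
  (forall a b, mat_det M a b = 1) -> cancel (fibre_map M) (fibre_map (mat_adj M)).
Proof.
move=> det1 [[[a b] x] y]; rewrite /= /entry /= !mulN1r.
rewrite -[x in RHS]mulr1 -[y in RHS]mulr1 -(det1 a b) /mat_det /entry.
by congr (_, _, _, _); ring.
Qed.

Lemma fibre_map_adjK M :
  (forall a b, mat_det M a b = 1) -> cancel (fibre_map (mat_adj M)) (fibre_map M).
Proof.
move=> det1 [[[a b] x] y]; rewrite /= /entry /= !mulN1r.
rewrite -[x in RHS]mulr1 -[y in RHS]mulr1 -(det1 a b) /mat_det /entry.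
by congr (_, _, _, _); ring.
Qed.

Lemma fibre_map_act M t p :
  weighted M -> t != 0 -> fibre_map M (act t p) = act t (fibre_map M p).
Proof.
case: p => [[[a b] x] y] wM t0; have [e11 e12 e21 e22] := wM t a b t0.
rewrite /= e11 e12 -e21 e22; congr (_, _, _, _); field; exact: t0.
Qed.

Lemma mu0K : involutive (@mu0 C).
Proof. by case=> [[[a b] x] y]; rewrite /= !conjCK. Qed.

Lemma mu0_act t p : mu0 (act t p) = act (sigma t) (mu0 p).
Proof.
case: p => [[[a b] x] y]; rewrite /= /sigma !rmorphM !fmorphV !rmorphXn.
by rewrite invrK exprVn invrK.
Qed.

Lemma mu0_fibre_map M p : mu0 (fibre_map M p) = fibre_map (mat_star M) (mu0 p).
Proof.
case: p => [[[a b] x] y]; rewrite /= !entry_twist !conjCK !conjCD !conjCM.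
by congr (_, _, _, _); rewrite addrC.
Qed.

Lemma fibre_map_star_star M p : fibre_map (mat_star (mat_star M)) p = fibre_map M p.
Proof. by case: p => [[[a b] x] y]; rewrite /= !entry_twist !conjCK. Qed.

Lemma antiregular_fibre_map_mu0 M (f : Y C -> Y C) :
  (forall p, f p = fibre_map M (mu0 p)) -> antiregular f.
Proof.
move=> fE; have [P1 [P2 [P3 [P4 gE]]]] := regular_fibre_map (mat_star M).
exists P2, P1, P4, P3 => p.
by rewrite fE -fibre_map_star_star -mu0_fibre_map gE.
Qed.

Definition pT : poly4 C := Xa |*| Xb.

Definition Phi : mat :=
  Mat (Cst 1 |+| Cst (-1) |*| pT) (ppow Xa 4)
      (Cst (-1) |*| ppow Xb 4) (Cst 1 |+| pT |+| ppow pT 2 |+| ppow pT 3).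

Definition Psi : mat :=
  Mat (Cst ((1 - 'i) / 4) |*| ppow pT 2
         |+| (Cst 1 |+| Cst (-1) |*| pT) |*| (Cst 1 |+| Cst ((1 - 'i) / 2) |*| pT))
      (Cst ((1 + 'i) / 4) |*| ppow Xa 4)
      ((Cst ((-3 - 'i) / 4) |+| Cst ((-1 + 'i) / 4) |*| pT) |*| ppow Xb 4)
      (Cst 1 |+| Cst ((1 + 'i) / 2) |*| pT |+| Cst ((1 + 'i) / 4) |*| (ppow pT 2 |+| ppow pT 3)).

Lemma phiE p : phi p = fibre_map Phi p.
Proof. by case: p => [[[a b] x] y]; rewrite /= /entry /=; congr (_, _, _, _); ring. Qed.

Lemma weighted_Phi : weighted Phi.
Proof. by move=> t a b t0; rewrite /entry /=; split; field. Qed.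

Lemma weighted_Psi : weighted Psi.
Proof. by move=> t a b t0; rewrite /entry /=; split; field. Qed.

Lemma Phi_cocycle p : fibre_map Phi (fibre_map (mat_star Phi) p) = p.
Proof.
case: p => [[[a b] x] y]; rewrite /= /entry /=.
by rewrite ?(conjCD, conjCM, conjC1, conjCN1, conjCK); congr (_, _, _, _); ring.
Qed.

Lemma det_Psi a b : mat_det Psi a b = 1.
Proof. by rewrite /mat_det /entry /=; field: (sqrCi C). Qed.

Lemma Psi_coboundary p :
  fibre_map Psi (fibre_map (mat_star (mat_adj Psi)) p) = fibre_map Phi p.
Proof.
case: p => [[[a b] x] y]; rewrite /= /entry /=.
rewrite ?(conjCD, conjCB, conjCN, conjCM, conjCV, conjC1, conjCN1, conjC_nat, conjCi, conjCK).
by congr (_, _, _, _); field: (sqrCi C).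
Qed.

End CircleForms.

Theorem proposition6p1 (C : numClosedFieldType) :
  real_circle_form (@mu C) /\ equivalent_forms (@mu0 C) (@mu C).
Proof.
have muE p : mu p = fibre_map (Phi C) (mu0 p) by exact: phiE.
split; first split.
- exact: antiregular_fibre_map_mu0 muE.
- by move=> p; rewrite !muE mu0_fibre_map mu0K Phi_cocycle.
- move=> t p t0; have st0 : sigma t != 0 by rewrite invr_eq0 conjC_eq0.
  by rewrite !muE mu0_act fibre_map_act //; exact: weighted_Phi.
exists (fibre_map (Psi C)), (fibre_map (mat_adj (Psi C))); split; first split.
- exact: regular_fibre_map.
- exact: regular_fibre_map.
- exact/fibre_mapK/det_Psi.
- exact/fibre_map_adjK/det_Psi.
- by move=> t p t0; rewrite fibre_map_act //; exact: weighted_Psi.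
by move=> p; rewrite muE mu0_fibre_map Psi_coboundary.
Qed.
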